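(* There is an absolute constant $\gamma'>0$ such that the following holds. Let $f:X\times Y\to\{0,1\}$, $b>0$, and let $\nu$ be a balanced distribution on $X\times Y$ such that every rectangle $R\subseteq X\times Y$ with $\nu(R)\ge 2^{-b}$ satisfies $\nu(f^{-1}(1)\mid R)\le 3/4$. Let $k\le b$ and let $f_k(x,y)=(f(x_1,y_1),\dots,f(x_k,y_k))$ on $X^k\times Y^k$. Then every rectangle $R\subseteq X^k\times Y^k$ with $\nu^k(R)\ge 2^{-b/2}$ satisfies $\nu^k(\{(x,y)\in R: f_k(x,y)=c\}\mid R)\le 2^{-\gamma' k}$ for every $c\in\{0,1\}^k$ with at least $k/3$ ones.
   Context: A distribution $\nu$ on $X\times Y$ is balanced for $f$ if $\nu(f^{-1}(0))=\nu(f^{-1}(1))=1/2$. Rectangles are product sets; $\nu^k$ is the $k$-fold product distribution on $X^k\times Y^k$. *)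

From HB Require Import structures.
From mathcomp Require Import all_boot all_order all_algebra.
From mathcomp Require Import all_classical all_reals.
From mathcomp Require Import exp Rstruct.
Set Implicit Arguments. Unset Strict Implicit. Unset Printing Implicit Defensive.
Import Order.TTheory GRing.Theory Num.Theory.
Local Open Scope ring_scope.

Notation RR := Rdefinitions.R.

Definition is_distr (T : finType) (nu : {ffun T -> RR}) : Prop :=
  (forall t, 0 <= nu t) /\ \sum_(t : T) nu t = 1.

Definition prob (T : finType) (nu : {ffun T -> RR}) (S : {set T}) : RR :=
  \sum_(t in S) nu t.

Definition cprob (T : finType) (nu : {ffun T -> RR}) (S C : {set T}) : RR :=
  prob nu (S :&: C) / prob nu C.

Definition fpre (X Y : finType) (f : X -> Y -> bool) (v : bool) : {set X * Y} :=
  [set p | f p.1 p.2 == v].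

Definition balanced (X Y : finType) (f : X -> Y -> bool) (nu : {ffun X * Y -> RR}) : Prop :=
  prob nu (fpre f false) = 1 / 2 /\ prob nu (fpre f true) = 1 / 2.

Definition rect (X Y : finType) (A : {set X}) (B : {set Y}) : {set X * Y} := finset.setX A B.

Notation pow k X := {ffun 'I_k -> X}.

Definition prod_distr (X Y : finType) (k : nat) (nu : {ffun X * Y -> RR}) :
  {ffun (pow k X) * (pow k Y) -> RR} :=
  [ffun p : pow k X * pow k Y => \prod_(i < k) nu (p.1 i, p.2 i)].

Definition fk (X Y : finType) (k : nat) (f : X -> Y -> bool)
  (x : pow k X) (y : pow k Y) : pow k bool :=
  [ffun i => f (x i) (y i)].

Definition ones (k : nat) (c : pow k bool) : nat := #|[set i | c i]|.

From HB Require Import structures.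
From mathcomp Require Import all_boot all_order all_algebra.
From mathcomp Require Import all_classical all_reals.
From mathcomp Require Import exp Rstruct.
From mathcomp Require Import ring lra.
Import Order.TTheory GRing.Theory Num.Theory.
Set Implicit Arguments. Unset Strict Implicit. Unset Printing Implicit Defensive.
Local Open Scope ring_scope.

(* Let I be the set of coordinates where c is 1, so that 3 |I| >= k; the event f_k = c
   lies in the event that f(x_i, y_i) = 1 for every i in I.  Fixing all coordinates of a
   rectangle A x B of X^k x Y^k but the i-th leaves a rectangle of X x Y, whose nu-mass
   inside f^-1(1) is at most 3/4 of its mass plus d/4 with d = 2^-b (apply the hypothesis
   if its mass is at least d, and trivially otherwise).  Adding the coordinates of I one
   at a time thus gives nu^k(R and f = 1 on I) <= (3/4)^|I| (nu^k(R) - d) + d, and as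
   nu^k(R) >= 2^(-b/2) the relative error d / nu^k(R) is at most 2^(-b/2) <= 2^(-k/2). *)

Lemma prob_subset (T : finType) (nu : {ffun T -> RR}) (S U : {set T}) :
  (forall t, 0 <= nu t) -> S \subset U -> prob nu S <= prob nu U.
Proof.
move=> nu_ge0 /fintype.subsetP sSU; rewrite /prob [leRHS](bigID [in S]) /=.
rewrite [X in _ <= X + _](eq_bigl [in S]) ?lerDl ?sumr_ge0 // => t.
by apply/andP/idP => [[]//|St]; rewrite sSU.
Qed.

Lemma is_distr_nonempty (T : finType) (nu : {ffun T -> RR}) :
  is_distr nu -> exists t : T, nu t != 0.
Proof.
move=> [_ sum1]; have [/existsP //|/existsPn nu0] := boolP [exists t, nu t != 0].
suff : \sum_t nu t = 0 by rewrite sum1 => /eqP; rewrite oner_eq0.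
by rewrite big1 // => t _; apply/eqP/negbNE/nu0.
Qed.

Section Coordinates.
Variables (X Y : finType) (k : nat).
Implicit Types (p q : pow k X * pow k Y) (i : 'I_k) (ab : X * Y).

Definition upd (T : Type) (x : {ffun 'I_k -> T}) i (a : T) : {ffun 'I_k -> T} :=
  [ffun j => if j == i then a else x j].

Lemma upd_upd (T : Type) (x : {ffun 'I_k -> T}) i a a' : upd (upd x i a) i a' = upd x i a'.
Proof. by apply/ffunP => j; rewrite !ffunE; case: (j == i). Qed.

Lemma upd_id (T : Type) (x : {ffun 'I_k -> T}) i : upd x i (x i) = x.
Proof. by apply/ffunP => j; rewrite !ffunE; case: eqP => // ->. Qed.

Definition coord p i : X * Y := (p.1 i, p.2 i).

Definition set_coord p i ab := (upd p.1 i ab.1, upd p.2 i ab.2).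

Lemma coord_set_coord p i ab : coord (set_coord p i ab) i = ab.
Proof. by case: ab => a b; rewrite /coord /= !ffunE eqxx. Qed.

Lemma sum_fiber_coord (F : pow k X * pow k Y -> RR) i ab0 :
  \sum_p F p = \sum_(q | coord q i == ab0) \sum_ab F (set_coord q i ab).
Proof.
rewrite (partition_big (coord^~ i) predT) //= [RHS]exchange_big /=.
apply: eq_bigr => ab _.
rewrite (reindex_onto (fun q => set_coord q i ab) (fun q => set_coord q i ab0)) /=; last first.
  by move=> [x y] /eqP <-; rewrite /set_coord /= !upd_upd !upd_id.
apply: eq_bigl => [[x y]]; rewrite coord_set_coord eqxx /set_coord /= !upd_upd.
apply/eqP/eqP => [[<- <-]|<-]; last by rewrite !upd_id.
by rewrite /coord /= !ffunE !eqxx; case: ab0.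
Qed.

Definition weight_off (nu : {ffun X * Y -> RR}) p i : RR :=
  \prod_(j | j != i) nu (coord p j).

Lemma prod_distr_set_coord (nu : {ffun X * Y -> RR}) p i ab :
  prod_distr k nu (set_coord p i ab) = nu ab * weight_off nu p i.
Proof.
rewrite ffunE (bigD1 i) //= !ffunE eqxx; case: ab => a b; congr (_ * _).
by apply: eq_bigr => j /negbTE ji; rewrite !ffunE ji.
Qed.

Definition slice_rect (A : {set pow k X}) (B : {set pow k Y}) p i : {set X * Y} :=
  rect [set a | upd p.1 i a \in A] [set b | upd p.2 i b \in B].

Lemma mem_rect_set_coord A B p i ab :
  (set_coord p i ab \in rect A B) = (ab \in slice_rect A B p i).
Proof. by case: ab => a b; rewrite !finset.in_setX !inE. Qed.

Lemma is_distr_prod_distr (nu : {ffun X * Y -> RR}) :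
  is_distr nu -> is_distr (prod_distr k nu).
Proof.
move=> [nu_ge0 sum1]; split=> [p|]; first by rewrite ffunE prodr_ge0.
pose zip (g : {ffun 'I_k -> X * Y}) : pow k X * pow k Y :=
  ([ffun j => (g j).1], [ffun j => (g j).2]).
pose unzip p : {ffun 'I_k -> X * Y} := [ffun j => coord p j].
rewrite (reindex zip); last first.
  exists unzip => [g _|[x y] _]; rewrite /unzip /zip.
    by apply/ffunP => j; rewrite ffunE /coord /= !ffunE; case: (g j).
  by congr pair; apply/ffunP => j; rewrite !ffunE.
transitivity (\sum_(g : {ffun 'I_k -> X * Y}) \prod_(j < k) nu (g j)).
  by apply: eq_bigr => g _; rewrite ffunE; apply: eq_bigr => j _; rewrite !ffunE; case: (g j).
by rewrite -(bigA_distr_bigA (fun _ => nu)) /= big1.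
Qed.

Lemma sum_weight_off (nu : {ffun X * Y -> RR}) i ab0 :
  is_distr nu -> \sum_(q | coord q i == ab0) weight_off nu q i = 1.
Proof.
move=> nu_distr; have [_ sum1] := nu_distr.
have [_ <-] := is_distr_prod_distr nu_distr.
rewrite (sum_fiber_coord _ i ab0); apply: eq_bigr => q _.
by under eq_bigr do rewrite prod_distr_set_coord; rewrite -big_distrl /= sum1 mul1r.
Qed.

Lemma prob_rect_slice (nu : {ffun X * Y -> RR}) A B (C : {set pow k X * pow k Y})
    (S : {set X * Y}) i ab0 :
  (forall p ab, (set_coord p i ab \in C) = (p \in C)) ->
  prob (prod_distr k nu) (rect A B :&: C :&: [set p | coord p i \in S]) =
  \sum_(q | coord q i == ab0)
     (if q \in C then weight_off nu q i * prob nu (S :&: slice_rect A B q i) else 0).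
Proof.
move=> C_free; rewrite /prob big_mkcond (sum_fiber_coord _ i ab0); apply: eq_bigr => q _.
under eq_bigr do rewrite !finset.in_setI mem_rect_set_coord C_free inE coord_set_coord
  prod_distr_set_coord.
case: (q \in C) => /=; last by rewrite big1 // => ab _; rewrite andbF.
rewrite mulrC big_distrl /= [RHS]big_mkcond; apply: eq_bigr => ab _.
by rewrite finset.in_setI andbC andbT.
Qed.

Definition ones_on (f : X -> Y -> bool) (s : seq 'I_k) : {set pow k X * pow k Y} :=
  [set p | all (fun j => coord p j \in fpre f true) s].

Lemma ones_on_cons f i s :
  ones_on f (i :: s) = ones_on f s :&: [set p | coord p i \in fpre f true].
Proof. by apply/setP => p; rewrite finset.in_setI !inE /= andbC inE. Qed.

Lemma mem_ones_on_set_coord f s p i ab :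
  i \notin s -> (set_coord p i ab \in ones_on f s) = (p \in ones_on f s).
Proof.
move=> i_notin_s; rewrite !inE; apply: eq_in_all => j j_in_s.
have /negbTE ji : j != i by apply: contraNneq i_notin_s => <-.
by rewrite /coord /= !ffunE ji.
Qed.

Lemma fk_eq_sub_ones_on f (c : pow k bool) :
  [set p | fk f p.1 p.2 == c] \subset ones_on f (enum [set i | c i]).
Proof.
apply/fintype.subsetP => p; rewrite !inE => /eqP fk_c; apply/allP => j.
by rewrite mem_enum inE -fk_c ffunE /fpre inE eqb_id.
Qed.

End Coordinates.

Definition rect_density_bound (X Y : finType) (f : X -> Y -> bool) (nu : {ffun X * Y -> RR})
    (d : RR) : Prop :=
  forall (A : {set X}) (B : {set Y}),
    prob nu (rect A B) >= d -> cprob nu (fpre f true) (rect A B) <= 3 / 4.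

Lemma prob_true_rect_le (X Y : finType) (f : X -> Y -> bool) (nu : {ffun X * Y -> RR}) d
    (A : {set X}) (B : {set Y}) :
  (forall t, 0 <= nu t) -> 0 < d -> rect_density_bound f nu d ->
  prob nu (fpre f true :&: rect A B) <= 3 / 4 * prob nu (rect A B) + d / 4.
Proof.
move=> nu_ge0 d_gt0 dense.
have sub_rect : prob nu (fpre f true :&: rect A B) <= prob nu (rect A B).
  by apply: prob_subset => //; apply: subsetIr.
have [large|small] := lerP d (prob nu (rect A B)); last by lra.
have := dense A B large; rewrite /cprob finset.setIC ler_pdivrMr; lra.
Qed.

Section ProductRectangles.
Variables (X Y : finType) (f : X -> Y -> bool) (nu : {ffun X * Y -> RR}) (d : RR) (k : nat).
Hypotheses (nu_distr : is_distr nu) (d_gt0 : 0 < d) (dense : rect_density_bound f nu d).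
Variables (A : {set pow k X}) (B : {set pow k Y}).

Lemma prob_ones_on_cons_le i s :
  i \notin s ->
  prob (prod_distr k nu) (rect A B :&: ones_on f (i :: s)) <=
    3 / 4 * prob (prod_distr k nu) (rect A B :&: ones_on f s) + d / 4.
Proof.
move=> i_notin_s; have [nu_ge0 _] := nu_distr.
have [ab0 _] := is_distr_nonempty nu_distr.
have s_free p ab := @mem_ones_on_set_coord _ _ _ f s p i ab i_notin_s.
have -> : rect A B :&: ones_on f s =
    rect A B :&: ones_on f s :&: [set p | coord p i \in [set: X * Y]].
  by apply/setP => p; rewrite !finset.in_setI !inE andbT.
rewrite ones_on_cons finset.setIA !(prob_rect_slice _ _ _ _ ab0 s_free).
have -> : d / 4 = \sum_(q | coord q i == ab0) d / 4 * weight_off nu q i.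
  by rewrite -mulr_sumr sum_weight_off ?mulr1.
rewrite mulr_sumr -big_split /=.
apply: ler_sum => q _; case: ifP => _; last first.
  by rewrite mulr0 add0r mulr_ge0 ?divr_ge0 ?prodr_ge0 ?(ltW d_gt0).
rewrite finset.setTI mulrCA [d / 4 * _]mulrC -mulrDr.
by rewrite ler_wpM2l ?prodr_ge0 ?prob_true_rect_le.
Qed.

Lemma prob_ones_on_le s :
  uniq s ->
  prob (prod_distr k nu) (rect A B :&: ones_on f s) <=
    (3 / 4) ^+ size s * (prob (prod_distr k nu) (rect A B) - d) + d.
Proof.
elim: s => [_|i s IH /= /andP [i_notin_s s_uniq]].
  have -> : ones_on f [::] = [set: pow k X * pow k Y] by apply/setP => p; rewrite !inE.
  by rewrite finset.setIT expr0; lra.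
apply: le_trans (prob_ones_on_cons_le i_notin_s) _.
have := IH s_uniq; rewrite exprS; lra.
Qed.

End ProductRectangles.

Lemma bernoulli_le (R : realDomainType) (x : R) n : 0 <= x -> 1 + n%:R * x <= (1 + x) ^+ n.
Proof.
move=> x_ge0; elim: n => [|n IH]; first by rewrite mul0r addr0 expr0.
have nx2_ge0 : 0 <= n%:R * x * x by rewrite !mulr_ge0.
rewrite exprS -natr1; nra.
Qed.

(* For 2n independent coins of biases u and v, the left side is the probability that all
   u-coins or all v-coins land heads, the right side that in each of the n rounds one of
   the two coins does. *)
Lemma union_expr_le (R : realFieldType) (u v : R) n :
  0 <= u <= 1 -> 0 <= v <= 1 ->
  1 - (1 - u ^+ n) * (1 - v ^+ n) <= (1 - (1 - u) * (1 - v)) ^+ n.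
Proof.
move=> /andP [u_ge0 u_le1] /andP [v_ge0 v_le1].
elim: n => [|n IH]; first by rewrite !expr0; lra.
rewrite !exprS; move: IH; set un := u ^+ n; set vn := v ^+ n => IH.
have [un_ge0 un_le1] : 0 <= un /\ un <= 1 by rewrite exprn_ge0 ?exprn_ile1.
have [vn_ge0 vn_le1] : 0 <= vn /\ vn <= 1 by rewrite exprn_ge0 ?exprn_ile1.
have gap_ge0 : 0 <= u * vn * (1 - v) * (1 - un) + un * v * (1 - u) * (1 - vn).
  by rewrite addr_ge0 // !mulr_ge0 // subr_ge0.
apply: le_trans (ler_wpM2l _ IH); last by nra.
have -> : (1 - (1 - u) * (1 - v)) * (1 - (1 - un) * (1 - vn)) =
  1 - (1 - u * un) * (1 - v * vn) +
    (u * vn * (1 - v) * (1 - un) + un * v * (1 - u) * (1 - vn)) by ring.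
by rewrite lerDl.
Qed.

Lemma ratio_le_union_expr (R : realFieldType) (P x d a u v : R) n :
  0 < x -> 0 <= u <= 1 -> 0 <= v <= 1 -> 0 <= a <= u ^+ n -> 0 <= d / x <= v ^+ n ->
  P <= a * (x - d) + d -> P / x <= (1 - (1 - u) * (1 - v)) ^+ n.
Proof.
move=> x_gt0 u01 v01 /andP [a_ge0 a_le] /andP [e_ge0 e_le] P_le.
apply: le_trans (union_expr_le n u01 v01).
have [un_le1 vn_le1] : u ^+ n <= 1 /\ v ^+ n <= 1.
  by case/andP: u01 => ? ?; case/andP: v01 => ? ?; rewrite !exprn_ile1.
have prod_le : (1 - u ^+ n) * (1 - v ^+ n) * x <= (1 - a) * (1 - d / x) * x.
  by apply: (ler_wpM2r (ltW x_gt0)); apply: ler_pM; rewrite ?subr_ge0 ?lerB.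
have P_le' : P <= x - (1 - a) * (1 - d / x) * x.
  have dx : d / x * x = d by rewrite divfK ?gt_eqF.
  have adx : a * (d / x) * x = a * d by rewrite -mulrA dx.
  lra.
rewrite ler_pdivrMr //; lra.
Qed.

Lemma powR2_invn_expr n : (0 < n)%N -> powR 2 (n%:R^-1) ^+ n = 2 :> RR.
Proof.
move=> n_gt0; rewrite -powR_mulrn ?powR_ge0 // -powRrM mulVf ?powRr1 //.
by rewrite pnatr_eq0 -lt0n.
Qed.

Lemma powR2_Ninvn_le (r : RR) n :
  (0 < n)%N -> 0 < r -> r ^+ n <= 2 -> powR 2 (- n%:R^-1) <= r^-1.
Proof.
move=> n_gt0 r_gt0 rn_le2; rewrite powRN lef_pV2 ?posrE ?powR_gt0 //.
by rewrite -(ler_pXn2r n_gt0) ?powR2_invn_expr // nnegrE ?powR_ge0 ?ltW.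
Qed.

Lemma ge_powR2_Ninvn (r : RR) n :
  (0 < n)%N -> 0 < r -> 2 <= r ^+ n -> r^-1 <= powR 2 (- n%:R^-1).
Proof.
move=> n_gt0 r_gt0 rn_ge2; rewrite powRN lef_pV2 ?posrE ?powR_gt0 //.
by rewrite -(ler_pXn2r n_gt0) ?powR2_invn_expr // nnegrE ?powR_ge0 ?ltW.
Qed.

Lemma powR2_Nmulrn (g : RR) n : powR 2 (- (g * n%:R)) = powR 2 (- g) ^+ n.
Proof. by rewrite -mulNr powRrM powR_mulrn ?powR_ge0. Qed.

Lemma powR2_Nhalf_le : powR 2 (- 2%:R^-1) <= 71 / 100 :> RR.
Proof.
have -> : 71 / 100 = (100 / 71)^-1 :> RR by rewrite invf_div.
by apply: powR2_Ninvn_le => //; rewrite ?expr2; lra.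
Qed.

Lemma ge_powR2_Nfortieth : 39 / 40 <= powR 2 (- 40%:R^-1) :> RR.
Proof.
have -> : 39 / 40 = (1 + 39^-1)^-1 :> RR by field.
apply: ge_powR2_Ninvn => //; first lra.
apply: le_trans (bernoulli_le _ _) => //; lra.
Qed.

Lemma three_quarters_expr_le m k : (k <= 3 * m)%N -> (3 / 4) ^+ m <= (91 / 100) ^+ k :> RR.
Proof.
move=> k_le; apply: (@le_trans _ _ ((91 / 100) ^+ (3 * m))); last first.
  by apply: ler_wiXn2l => //; lra.
rewrite exprM; apply: lerXn2r; rewrite ?nnegrE ?exprn_ge0 //.
all: rewrite ?exprS ?expr0; lra.
Qed.

Lemma powR2_ratio_le (b x : RR) k :
  k%:R <= b -> powR 2 (- (b / 2)) <= x -> powR 2 (- b) / x <= (71 / 100) ^+ k.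
Proof.
move=> k_le_b x_large.
have x_gt0 : 0 < x by apply: lt_le_trans x_large; apply: powR_gt0.
apply: (@le_trans _ _ (powR 2 (- b) / powR 2 (- (b / 2)))).
  by rewrite ler_wpM2l ?powR_ge0 // lef_pV2 ?posrE ?powR_gt0.
rewrite -powRB ?pnatr_eq0 ?implybT //.
have -> : - b - - (b / 2) = - (2%:R^-1 * b) by field.
apply: (@le_trans _ _ (powR 2 (- (2%:R^-1 * k%:R)))).
  by apply: ler_powR; rewrite ?lerN2 ?ler_wpM2l //; lra.
rewrite powR2_Nmulrn; apply: lerXn2r; rewrite ?nnegrE ?powR_ge0 ?powR2_Nhalf_le //; lra.
Qed.

Theorem mainTheorem11 :
  exists gamma' : RR, 0 < gamma' /\
  forall (X Y : finType) (f : X -> Y -> bool) (b : RR) (nu : {ffun X * Y -> RR}),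
    0 < b ->
    is_distr nu ->
    balanced f nu ->
    (forall (A : {set X}) (B : {set Y}),
        prob nu (rect A B) >= powR 2 (- b) ->
        cprob nu (fpre f true) (rect A B) <= 3 / 4) ->
    forall k : nat, k%:R <= b ->
    forall (A : {set pow k X}) (B : {set pow k Y}),
      prob (prod_distr k nu) (rect A B) >= powR 2 (- (b / 2)) ->
      forall c : pow k bool, (k <= 3 * ones c)%N ->
        cprob (prod_distr k nu)
              [set p | fk f p.1 p.2 == c] (rect A B)
          <= powR 2 (- (gamma' * k%:R)).
Proof.
exists 40%:R^-1; split; first by rewrite invr_gt0 ltr0n.
move=> X Y f b nu _ nu_distr _ dense k k_le_b A B large c ones_c.
have [mu_ge0 _] := is_distr_prod_distr k nu_distr.
have d_gt0 : 0 < powR 2 (- b) by apply: powR_gt0.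
have x_gt0 : 0 < prob (prod_distr k nu) (rect A B).
  by apply: lt_le_trans large; apply: powR_gt0.
have event_le : prob (prod_distr k nu) ([set p | fk f p.1 p.2 == c] :&: rect A B) <=
    (3 / 4) ^+ ones c * (prob (prod_distr k nu) (rect A B) - powR 2 (- b)) + powR 2 (- b).
  rewrite /ones cardE.
  apply: le_trans (prob_ones_on_le nu_distr d_gt0 dense _ _ (enum_uniq _)).
  by apply: prob_subset; rewrite // finset.setIC finset.setIS ?fk_eq_sub_ones_on.
rewrite /cprob powR2_Nmulrn.
apply: le_trans
  (ratio_le_union_expr (u := 91 / 100) (v := 71 / 100) (n := k) x_gt0 _ _ _ _ event_le) _.
- by apply/andP; split; lra.
- by apply/andP; split; lra.
- by rewrite exprn_ge0 ?three_quarters_expr_le //; lra.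
- by rewrite divr_ge0 ?powR_ge0 ?(ltW x_gt0) ?powR2_ratio_le.
apply: lerXn2r; rewrite ?nnegrE ?powR_ge0 //; first lra.
apply: le_trans ge_powR2_Nfortieth; lra.
Qed.
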